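(* Let $S$ be a $\Sigma_1$-sequent, $H=(H_1,\dots,H_q)$ a Herbrand structure of $S$, $D=(U_1,\dots,U_q)\circ W$ a decomposition of $H$ with variables $\alpha_1,\dots,\alpha_n$ and $W=\{\bar w_1,\dots,\bar w_k\}$, and let $S^\sim$ be the schematic extended Herbrand sequent of $S$ with respect to $D$. Then the canonical substitution $[X\backslash \lambda\bar\alpha.\,C(S^\sim)]$ is a solution of $S^\sim$, i.e. $$C(S^\sim)(\bar\alpha)\to\bigwedge_{i=1}^k C(S^\sim)(\bar w_i),\ \mathcal F'_1,\dots,\mathcal F'_p\vdash \mathcal F'_{p+1},\dots,\mathcal F'_q$$ is a quasi-tautology.
   Context: We work in first-order predicate logic with equality. A $\Sigma_1$-sequent is a sequent $S$ of the form $\forall\bar x_1 F_1,\dots,\forall\bar x_p F_p\vdash\exists\bar x_{p+1}F_{p+1},\dots,\exists\bar x_q F_q$, where each $F_i$ is quantifier-free and $\bar x_i$ is a block of $k_i\ge 0$ variables. A sequent is E-valid if it is valid in predicate logic with equality (a quantifier-free formula or sequent with free variables is called E-valid if its universal closure is); a quasi-tautology is a quantifier-free E-valid sequent. A Herbrand structure of $S$ is a tuple $H=(H_1,\dots,H_q)$, $H_i$ a finite set of $k_i$-vectors of ground terms, such that, with $\mathcal F_i=\{F_i[\bar x_i\backslash\bar t]:\bar t\in H_i\}$ if $k_i>0$ and $\mathcal F_i=\{F_i\}$ if $k_i=0$, the sequent $\mathcal F_1\cup\dots\cup\mathcal F_p\vdash\mathcal F_{p+1}\cup\dots\cup\mathcal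 F_q$ is a quasi-tautology. A decomposition of $H$ is a pair $D=(U_1,\dots,U_q)\circ W$ where, for fresh variables $\bar\alpha=(\alpha_1,\dots,\alpha_n)$, each $U_i$ is a finite set of $k_i$-vectors of terms possibly containing the $\alpha_j$, and $W=\{\bar w_1,\dots,\bar w_k\}$ is a finite set of $n$-vectors of ground terms not containing any $\alpha_j$, such that $H_i=\{u[\bar\alpha\backslash\bar w]:u\in U_i,\bar w\in W\}$ for every $i$ with $k_i>0$. Put $\mathcal F'_i=\{F_i[\bar x_i\backslash\bar t]:\bar t\in U_i\}$ if $k_i>0$ and $\mathcal F'_i=\{F_i\}$ if $k_i=0$. For an $n$-place predicate variable $X$, the schematic extended Herbrand sequent of $S$ w.r.t. $D$ is $$S^\sim:\ X\bar\alpha\to\bigwedge_{i=1}^k X\bar w_i,\ \mathcal F'_1,\dots,\mathcal F'_p\vdash\mathcal F'_{p+1},\dots,\mathcal F'_q.$$ For a quantifier-free formula $A$ whose free variables are among $\alpha_1,\dots,\alpha_n$, the second-order substitution $[X\backslash\lambda\bar\alpha.A]$ is a solution of $S^\sim$ if $S^\sim[X\backslash\lambda\bar\alpha.A]$ is a quasi-tautology. Let $F[l]$ be the conjunction of all formulas in $\mathcal F'_1\cup\dots\cup\mathcal F'_p$ and $F[r]$ the disjunction of all formulas in $\mathcal F'_{p+1}\cup\dots\cup\mathcal F'_q$. The canonical formula is $C(S^\sim)=F[l]\wedge\neg F[r]$ (a formula in $\bar\alpha$), and $[X\backslash\lambda\bar\alpha.C(S^\sim)]$ is the canonical substitution; $C(S^\sim)(\bar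 t)$ denotes $C(S^\sim)[\bar\alpha\backslash\bar t]$. *)

From Stdlib Require Import List Arith.
Import ListNotations.

Section FOL.
Context {Fn Pr : Type}.  (* function symbols (constants = 0-ary) and predicate symbols *)

Inductive term : Type :=
| Var : nat -> term
| App : Fn -> list term -> term.

Fixpoint tvars (t : term) : list nat :=
  match t with
  | Var x => [x]
  | App _ l => concat (map tvars l)
  end.

Definition ground (t : term) : Prop := tvars t = [].

Fixpoint tsubst (s : nat -> term) (t : term) : term :=
  match t with
  | Var x => s x
  | App f l => App f (map (tsubst s) l)
  end.

Inductive formula : Type :=
| FTop : formula
| FBot : formula
| Atom : Pr -> list term -> formula
| Equ : term -> term -> formula
| Neg : formula -> formula
| Conj : formula -> formula -> formula
| Disj : formula -> formula -> formula
| Impl : formula -> formula -> formula.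

Fixpoint fvars (A : formula) : list nat :=
  match A with
  | FTop | FBot => []
  | Atom _ l => concat (map tvars l)
  | Equ t u => tvars t ++ tvars u
  | Neg B => fvars B
  | Conj B C | Disj B C | Impl B C => fvars B ++ fvars C
  end.

Fixpoint fsubst (s : nat -> term) (A : formula) : formula :=
  match A with
  | FTop => FTop
  | FBot => FBot
  | Atom p l => Atom p (map (tsubst s) l)
  | Equ t u => Equ (tsubst s t) (tsubst s u)
  | Neg B => Neg (fsubst s B)
  | Conj B C => Conj (fsubst s B) (fsubst s C)
  | Disj B C => Disj (fsubst s B) (fsubst s C)
  | Impl B C => Impl (fsubst s B) (fsubst s C)
  end.

(** Simultaneous substitution [xs \ ts] (variables not in xs are unchanged). *)
Fixpoint vsubst (xs : list nat) (ts : list term) (y : nat) : term :=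
  match xs, ts with
  | x :: xs', t :: ts' => if Nat.eqb x y then t else vsubst xs' ts' y
  | _, _ => Var y
  end.

Definition big_conj (l : list formula) : formula := fold_right Conj FTop l.
Definition big_disj (l : list formula) : formula := fold_right Disj FBot l.

(** Semantics (normal models: = is interpreted as identity). *)
Fixpoint teval {D : Type} (I : Fn -> list D -> D) (v : nat -> D) (t : term) : D :=
  match t with
  | Var x => v x
  | App f l => I f (map (teval I v) l)
  end.

Fixpoint holds {D : Type} (I : Fn -> list D -> D) (J : Pr -> list D -> Prop)
    (v : nat -> D) (A : formula) : Prop :=
  match A with
  | FTop => True
  | FBot => False
  | Atom p l => J p (map (teval I v) l)
  | Equ t u => teval I v t = teval I v u
  | Neg B => ~ holds I J v B
  | Conj B C => holds I J v B /\ holds I J v C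
  | Disj B C => holds I J v B \/ holds I J v C
  | Impl B C => holds I J v B -> holds I J v C
  end.

(** A quantifier-free sequent Gamma |- Delta (formulas of our type are
    quantifier-free by construction); it is a quasi-tautology iff it is E-valid,
    i.e. its universal closure is valid in every structure, i.e. it holds in
    every structure under every valuation. *)
Definition quasi_tautology (Gamma Delta : list formula) : Prop :=
  forall (D : Type) (I : Fn -> list D -> D) (J : Pr -> list D -> Prop) (v : nat -> D),
    (forall A, In A Gamma -> holds I J v A) -> exists B, In B Delta /\ holds I J v B.

(** A block  forall xs F  (antecedent) or  exists xs F  (succedent). *)
Record block : Type := mkBlock { bvars : list nat; body : formula }.

(** Sigma_1-sequent  forall x1 F1, ..., forall xp Fp |- exists x(p+1) F(p+1), ..., exists xq Fq. *)
Record sigma1_sequent : Type := mkSeq { ante : list block; succ : list block }.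

Definition blocks (S : sigma1_sequent) : list block := ante S ++ succ S.

Definition sigma1_wf (S : sigma1_sequent) : Prop :=
  forall b, In b (blocks S) ->
    NoDup (bvars b) /\ (forall x, In x (fvars (body b)) -> In x (bvars b)).

(** An assignment of a finite set (list) of term vectors to each block;
    the first p entries belong to the antecedent blocks, the rest to the
    succedent blocks. *)
Definition term_sets := list (list (list term)).

Fixpoint zipWith {A B C : Type} (f : A -> B -> C) (l1 : list A) (l2 : list B) : list C :=
  match l1, l2 with
  | a :: l1', b :: l2' => f a b :: zipWith f l1' l2'
  | _, _ => []
  end.

Definition instances (b : block) (T : list (list term)) : list formula :=
  match bvars b with
  | [] => [body b]
  | _ => map (fun t => fsubst (vsubst (bvars b) t) (body b)) T
  end.

Definition inst_ante (S : sigma1_sequent) (T : term_sets) : list formula :=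
  concat (zipWith instances (ante S) (firstn (length (ante S)) T)).
Definition inst_succ (S : sigma1_sequent) (T : term_sets) : list formula :=
  concat (zipWith instances (succ S) (skipn (length (ante S)) T)).

Definition shaped (S : sigma1_sequent) (T : term_sets) : Prop :=
  Forall2 (fun b Ti => forall t, In t Ti -> length t = length (bvars b)) (blocks S) T.

Definition herbrand_structure (S : sigma1_sequent) (H : term_sets) : Prop :=
  shaped S H /\
  (forall Hi t u, In Hi H -> In t Hi -> In u t -> ground u) /\
  quasi_tautology (inst_ante S H) (inst_succ S H).

Record decomposition : Type :=
  mkDec { alphas : list nat; U : term_sets; W : list (list term) }.

Definition is_decomposition (S : sigma1_sequent) (H : term_sets) (Dc : decomposition) : Prop :=
  NoDup (alphas Dc) /\
  (forall a b, In a (alphas Dc) -> In b (blocks S) ->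
      ~ In a (bvars b) /\ ~ In a (fvars (body b))) /\
  shaped S (U Dc) /\
  (forall Ui u s x, In Ui (U Dc) -> In u Ui -> In s u -> In x (tvars s) -> In x (alphas Dc)) /\
  (forall w, In w (W Dc) -> length w = length (alphas Dc) /\ forall s, In s w -> ground s) /\
  (forall i b, nth_error (blocks S) i = Some b -> bvars b <> [] ->
     forall Hi Ui, nth_error H i = Some Hi -> nth_error (U Dc) i = Some Ui ->
     forall t, In t Hi <->
       exists u w, In u Ui /\ In w (W Dc) /\ t = map (tsubst (vsubst (alphas Dc) w)) u).

Definition Fl' (S : sigma1_sequent) (Dc : decomposition) : list formula := inst_ante S (U Dc).
Definition Fr' (S : sigma1_sequent) (Dc : decomposition) : list formula := inst_succ S (U Dc).

Definition ext_seq_inst_ante (S : sigma1_sequent) (Dc : decomposition) (A : formula)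
  : list formula :=
  Impl A (big_conj (map (fun w => fsubst (vsubst (alphas Dc) w) A) (W Dc))) :: Fl' S Dc.

Definition is_solution (S : sigma1_sequent) (Dc : decomposition) (A : formula) : Prop :=
  quasi_tautology (ext_seq_inst_ante S Dc A) (Fr' S Dc).

Definition canonical_formula (S : sigma1_sequent) (Dc : decomposition) : formula :=
  Conj (big_conj (Fl' S Dc)) (Neg (big_disj (Fr' S Dc))).

End FOL.

Arguments term : clear implicits.
Arguments formula : clear implicits.

(** Write C for the canonical formula F[l] /\ ~ F[r].  A valuation satisfies C
    exactly when it refutes the sequent F'_l |- F'_r.  Suppose a valuation v
    satisfies C -> /\_i C(w_i) and F'_l but no formula of F'_r.  Then v
    satisfies C, hence every C(w_i), so v and all the shifted valuations
    v o [alpha \ w_i] refute F'_l |- F'_r.  Every instance in the Herbrand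
    sequent is F[x \ u[alpha \ w]] for a U-vector u and some w in W (or a closed
    body F), and by the substitution and coincidence lemmas it is true under v
    iff the U-instance F[x \ u] is true under v o [alpha \ w].  So v satisfies
    the antecedent of the Herbrand sequent and falsifies its succedent,
    contradicting that it is a quasi-tautology. *)

From Stdlib Require Import List.
From Stdlib Require Import Arith Lia Classical.
Import ListNotations.

Section Semantics.
Context {Fn Pr : Type}.

Lemma term_ind' (P : term Fn -> Prop) :
  (forall x, P (Var x)) -> (forall f l, Forall P l -> P (App f l)) -> forall t, P t.
Proof.
  intros HV HA. fix IH 1. intros [x|f l].
  - apply HV.
  - apply HA. induction l as [|a l IHl]; constructor; [apply IH | exact IHl].
Qed.

Definition subst_val {D : Type} (I : Fn -> list D -> D) (v : nat -> D)
    (s : nat -> term Fn) : nat -> D :=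
  fun x => teval I v (s x).

Lemma teval_tsubst {D} (I : Fn -> list D -> D) v s (t : term Fn) :
  teval I v (tsubst s t) = teval I (subst_val I v s) t.
Proof.
  induction t as [x|f l IH] using term_ind'; simpl; auto.
  f_equal. rewrite map_map. apply map_ext_in. intros a Ha.
  rewrite Forall_forall in IH; auto.
Qed.

Lemma holds_fsubst {D} (I : Fn -> list D -> D) (J : Pr -> list D -> Prop) v s
    (A : formula Fn Pr) :
  holds I J v (fsubst s A) <-> holds I J (subst_val I v s) A.
Proof.
  induction A; simpl; try tauto.
  - rewrite map_map. erewrite map_ext; [reflexivity|]. intros; apply teval_tsubst.
  - rewrite !teval_tsubst. tauto.
Qed.

Lemma teval_agree {D} (I : Fn -> list D -> D) v1 v2 (t : term Fn) :
  (forall x, In x (tvars t) -> v1 x = v2 x) -> teval I v1 t = teval I v2 t.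
Proof.
  induction t as [x|f l IH] using term_ind'; simpl; intros Hag.
  - apply Hag; auto.
  - f_equal. apply map_ext_in. intros a Ha.
    rewrite Forall_forall in IH. apply IH; auto.
    intros x Hx. apply Hag. apply in_concat. exists (tvars a). auto using in_map.
Qed.

Lemma holds_agree {D} (I : Fn -> list D -> D) (J : Pr -> list D -> Prop) v1 v2
    (A : formula Fn Pr) :
  (forall x, In x (fvars A) -> v1 x = v2 x) -> (holds I J v1 A <-> holds I J v2 A).
Proof.
  induction A as [| |p l|t t'|A IHA|A1 IHA1 A2 IHA2|A1 IHA1 A2 IHA2|A1 IHA1 A2 IHA2];
    simpl; intros Hag; try tauto.
  - erewrite map_ext_in; [reflexivity|]. intros a Ha. apply teval_agree.
    intros x Hx. apply Hag. apply in_concat. exists (tvars a). auto using in_map.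
  - rewrite (teval_agree I v1 v2 t), (teval_agree I v1 v2 t'); try tauto;
      intros; apply Hag; apply in_or_app; auto.
  - rewrite IHA1, IHA2; try tauto; intros; apply Hag; apply in_or_app; auto.
  - rewrite IHA1, IHA2; try tauto; intros; apply Hag; apply in_or_app; auto.
  - rewrite IHA1, IHA2; try tauto; intros; apply Hag; apply in_or_app; auto.
Qed.

Lemma tvars_tsubst s (t : term Fn) x :
  In x (tvars (tsubst s t)) -> exists y, In y (tvars t) /\ In x (tvars (s y)).
Proof.
  induction t as [z|f l IH] using term_ind'; simpl; intros Hx.
  - exists z; auto.
  - apply in_concat in Hx as [L [HL Hx]].
    rewrite map_map in HL. apply in_map_iff in HL as [a [<- Ha]].
    rewrite Forall_forall in IH. destruct (IH a Ha Hx) as [y [Hy1 Hy2]].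
    exists y. split; auto. apply in_concat. exists (tvars a). auto using in_map.
Qed.

Lemma fvars_fsubst s (A : formula Fn Pr) x :
  In x (fvars (fsubst s A)) -> exists y, In y (fvars A) /\ In x (tvars (s y)).
Proof.
  induction A as [| |p l|t t'|A IHA|A1 IHA1 A2 IHA2|A1 IHA1 A2 IHA2|A1 IHA1 A2 IHA2];
    simpl; intros Hx; try contradiction; auto.
  - apply in_concat in Hx as [L [HL Hx]].
    rewrite map_map in HL. apply in_map_iff in HL as [a [<- Ha]].
    destruct (tvars_tsubst s a x Hx) as [y [Hy1 Hy2]].
    exists y. split; auto. apply in_concat. exists (tvars a). auto using in_map.
  - apply in_app_or in Hx as [Hx|Hx];
      destruct (tvars_tsubst _ _ _ Hx) as [y [Hy1 Hy2]];
      exists y; split; auto; apply in_or_app; auto.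
  - apply in_app_or in Hx as [Hx|Hx];
      [destruct (IHA1 Hx) as [y [? ?]] | destruct (IHA2 Hx) as [y [? ?]]];
      exists y; split; auto; apply in_or_app; auto.
  - apply in_app_or in Hx as [Hx|Hx];
      [destruct (IHA1 Hx) as [y [? ?]] | destruct (IHA2 Hx) as [y [? ?]]];
      exists y; split; auto; apply in_or_app; auto.
  - apply in_app_or in Hx as [Hx|Hx];
      [destruct (IHA1 Hx) as [y [? ?]] | destruct (IHA2 Hx) as [y [? ?]]];
      exists y; split; auto; apply in_or_app; auto.
Qed.

Lemma big_conj_holds {D} (I : Fn -> list D -> D) (J : Pr -> list D -> Prop) v
    (l : list (formula Fn Pr)) :
  holds I J v (big_conj l) <-> forall A, In A l -> holds I J v A.
Proof.
  induction l as [|B l IHl]; simpl.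
  - split; auto; contradiction.
  - rewrite IHl. split.
    + intros [HB Hl] A [<-|HA]; auto.
    + auto.
Qed.

Lemma big_disj_holds {D} (I : Fn -> list D -> D) (J : Pr -> list D -> Prop) v
    (l : list (formula Fn Pr)) :
  holds I J v (big_disj l) <-> exists A, In A l /\ holds I J v A.
Proof.
  induction l as [|B l IHl]; simpl.
  - split; [contradiction | intros [? [[] _]]].
  - rewrite IHl. split.
    + intros [HB|[A [HA HAh]]]; eauto.
    + intros [A [[<-|HA] HAh]]; eauto.
Qed.

Lemma fvars_big_conj (l : list (formula Fn Pr)) x :
  In x (fvars (big_conj l)) -> exists A, In A l /\ In x (fvars A).
Proof.
  induction l as [|B l IHl]; simpl; intros Hx; [contradiction|].
  apply in_app_or in Hx as [Hx|Hx]; eauto.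
  destruct (IHl Hx) as [A [? ?]]; eauto.
Qed.

Lemma fvars_big_disj (l : list (formula Fn Pr)) x :
  In x (fvars (big_disj l)) -> exists A, In A l /\ In x (fvars A).
Proof.
  induction l as [|B l IHl]; simpl; intros Hx; [contradiction|].
  apply in_app_or in Hx as [Hx|Hx]; eauto.
  destruct (IHl Hx) as [A [? ?]]; eauto.
Qed.

Definition refutes {D : Type} (I : Fn -> list D -> D) (J : Pr -> list D -> Prop)
    (v : nat -> D) (Gamma Delta : list (formula Fn Pr)) : Prop :=
  (forall A, In A Gamma -> holds I J v A) /\ (forall B, In B Delta -> ~ holds I J v B).

Lemma holds_refutation_formula {D} (I : Fn -> list D -> D) (J : Pr -> list D -> Prop)
    v (Gamma Delta : list (formula Fn Pr)) :
  holds I J v (Conj (big_conj Gamma) (Neg (big_disj Delta))) <->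
  refutes I J v Gamma Delta.
Proof.
  unfold refutes. cbn [holds]. rewrite big_conj_holds, big_disj_holds. firstorder.
Qed.

Lemma vsubst_map (f : term Fn -> term Fn) xs u x :
  length u = length xs -> In x xs -> vsubst xs (map f u) x = f (vsubst xs u x).
Proof.
  revert u; induction xs as [|a xs IH]; intros [|t u]; simpl; intros Hl Hx;
    try discriminate; try contradiction.
  destruct (Nat.eqb a x) eqn:E; auto. apply IH; [lia|].
  destruct Hx as [->|Hx]; auto. rewrite Nat.eqb_refl in E; discriminate.
Qed.

Lemma vsubst_mem xs (u : list (term Fn)) x :
  length u = length xs -> In x xs -> In (vsubst xs u x) u.
Proof.
  revert u; induction xs as [|a xs IH]; intros [|t u]; simpl; intros Hl Hx;
    try discriminate; try contradiction.
  destruct (Nat.eqb a x) eqn:E; auto. right. apply IH; [lia|].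
  destruct Hx as [->|Hx]; auto. rewrite Nat.eqb_refl in E; discriminate.
Qed.

End Semantics.

Lemma in_concat_zipWith {B X Y} (f : B -> X -> list Y) bs xs A :
  In A (concat (zipWith f bs xs)) <->
  exists i b x, nth_error bs i = Some b /\ nth_error xs i = Some x /\ In A (f b x).
Proof.
  revert xs; induction bs as [|b bs IH]; intros [|x xs]; simpl.
  - split; [contradiction | intros (i & b & x & E & _); destruct i; discriminate].
  - split; [contradiction | intros (i & b' & x' & E & _); destruct i; discriminate].
  - split; [contradiction | intros (i & b' & x' & _ & E & _); destruct i; discriminate].
  - rewrite in_app_iff, IH. split.
    + intros [HA | (i & b' & x' & E1 & E2 & HA)].
      * exists 0, b, x; auto.
      * exists (S i), b', x'; auto.
    + intros ([|i] & b' & x' & E1 & E2 & HA); simpl in E1, E2.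
      * injection E1 as <-. injection E2 as <-. auto.
      * right. exists i, b', x'; auto.
Qed.

Section Instances.
Context {Fn Pr : Type}.

Lemma in_inst_ante (S : @sigma1_sequent Fn Pr) (T : term_sets) A :
  In A (inst_ante S T) <->
  exists i b Ti, i < length (ante S) /\ nth_error (blocks S) i = Some b /\
    nth_error T i = Some Ti /\ In A (instances b Ti).
Proof.
  unfold inst_ante, blocks. rewrite in_concat_zipWith. split.
  - intros (i & b & Ti & E1 & E2 & HA).
    assert (Hi : i < length (ante S)) by (apply nth_error_Some; congruence).
    rewrite nth_error_firstn in E2. rewrite (proj2 (Nat.ltb_lt _ _) Hi) in E2.
    exists i, b, Ti. rewrite nth_error_app1; auto.
  - intros (i & b & Ti & Hi & E1 & E2 & HA). rewrite nth_error_app1 in E1 by exact Hi.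
    exists i, b, Ti. rewrite nth_error_firstn, (proj2 (Nat.ltb_lt _ _) Hi). auto.
Qed.

Lemma in_inst_succ (S : @sigma1_sequent Fn Pr) (T : term_sets) A :
  In A (inst_succ S T) <->
  exists i b Ti, length (ante S) <= i /\ nth_error (blocks S) i = Some b /\
    nth_error T i = Some Ti /\ In A (instances b Ti).
Proof.
  unfold inst_succ, blocks. rewrite in_concat_zipWith. split.
  - intros (i & b & Ti & E1 & E2 & HA). rewrite nth_error_skipn in E2.
    exists (length (ante S) + i), b, Ti. rewrite nth_error_app2 by lia.
    replace (length (ante S) + i - length (ante S)) with i by lia. repeat split; auto; lia.
  - intros (i & b & Ti & Hi & E1 & E2 & HA). rewrite nth_error_app2 in E1 by exact Hi.
    exists (i - length (ante S)), b, Ti. rewrite nth_error_skipn.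
    replace (length (ante S) + (i - length (ante S))) with i by lia. auto.
Qed.

Lemma inst_transfer (S : @sigma1_sequent Fn Pr) (T1 T2 : term_sets)
    (R : formula Fn Pr -> formula Fn Pr -> Prop) :
  length T1 = length T2 ->
  (forall i b T1i T2i, nth_error (blocks S) i = Some b ->
     nth_error T1 i = Some T1i -> nth_error T2 i = Some T2i ->
     forall A, In A (instances b T1i) -> exists A', In A' (instances b T2i) /\ R A A') ->
  (forall A, In A (inst_ante S T1) -> exists A', In A' (inst_ante S T2) /\ R A A') /\
  (forall A, In A (inst_succ S T1) -> exists A', In A' (inst_succ S T2) /\ R A A').
Proof.
  intros Hlen Hblock.
  assert (Hpartner : forall i T1i, nth_error T1 i = Some T1i ->
            exists T2i, nth_error T2 i = Some T2i).
  { intros i T1i E. destruct (nth_error T2 i) as [T2i|] eqn:E2; [eauto|].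
    apply nth_error_None in E2. assert (i < length T1) by (apply nth_error_Some; congruence).
    lia. }
  split; intros A HA.
  - apply in_inst_ante in HA as (i & b & T1i & Hi & Eb & E1 & HA).
    destruct (Hpartner i T1i E1) as [T2i E2].
    destruct (Hblock i b T1i T2i Eb E1 E2 A HA) as (A' & HA' & HR).
    exists A'. split; auto. apply in_inst_ante. exists i, b, T2i. auto.
  - apply in_inst_succ in HA as (i & b & T1i & Hi & Eb & E1 & HA).
    destruct (Hpartner i T1i E1) as [T2i E2].
    destruct (Hblock i b T1i T2i Eb E1 E2 A HA) as (A' & HA' & HR).
    exists A'. split; auto. apply in_inst_succ. exists i, b, T2i. auto.
Qed.

Lemma shaped_nth (S : @sigma1_sequent Fn Pr) (T : term_sets) i b Ti :
  shaped S T -> nth_error (blocks S) i = Some b -> nth_error T i = Some Ti ->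
  forall t, In t Ti -> length t = length (bvars b).
Proof.
  unfold shaped. intros Hshape. revert i.
  induction Hshape as [|b' Ti' bs Ts Hbt _ IH]; intros [|i] Eb ET; try discriminate.
  - injection Eb as <-. injection ET as <-. exact Hbt.
  - exact (IH i Eb ET).
Qed.

Lemma instances_fvars (b : @block Fn Pr) (Ui : list (list (term Fn))) (al : list nat) :
  (forall x, In x (fvars (body b)) -> In x (bvars b)) ->
  (forall u, In u Ui -> length u = length (bvars b)) ->
  (forall u s x, In u Ui -> In s u -> In x (tvars s) -> In x al) ->
  forall A, In A (instances b Ui) -> forall x, In x (fvars A) -> In x al.
Proof.
  intros Hclosed Hshape Hvars A HA x Hx. unfold instances in HA.
  destruct (bvars b) as [|y ys] eqn:E.
  - destruct HA as [<-|[]]. destruct (Hclosed x Hx).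
  - apply in_map_iff in HA as [u [<- Hu]].
    apply fvars_fsubst in Hx as [z [Hz Hxz]].
    apply (Hvars u (vsubst (y :: ys) u z) x Hu); auto using vsubst_mem.
Qed.

Definition shifts {D : Type} (I : Fn -> list D -> D) (v : nat -> D) (al : list nat)
    (W : list (list (term Fn))) (v' : nat -> D) : Prop :=
  v' = v \/ exists w, In w W /\ v' = subst_val I v (vsubst al w).

Lemma instances_transfer {D} (I : Fn -> list D -> D) (J : Pr -> list D -> Prop)
    (v : nat -> D) (b : @block Fn Pr) (Hi Ui : list (list (term Fn))) al W :
  (forall x, In x (fvars (body b)) -> In x (bvars b)) ->
  (forall u, In u Ui -> length u = length (bvars b)) ->
  (bvars b <> [] -> forall t, In t Hi ->
     exists u w, In u Ui /\ In w W /\ t = map (tsubst (vsubst al w)) u) ->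
  forall A, In A (instances b Hi) ->
  exists A', In A' (instances b Ui) /\
    exists v', shifts I v al W v' /\ (holds I J v A <-> holds I J v' A').
Proof.
  intros Hclosed Hshape Hdec A HA. unfold instances in *.
  destruct (bvars b) as [|y ys] eqn:E.
  - destruct HA as [<-|[]]. exists (body b). split; [left; auto|].
    exists v. split; [left; auto | tauto].
  - apply in_map_iff in HA as [t [<- Ht]].
    destruct (Hdec ltac:(discriminate) t Ht) as (u & w & Hu & Hw & ->).
    exists (fsubst (vsubst (y :: ys) u) (body b)). split; [apply in_map_iff; exists u; auto|].
    exists (subst_val I v (vsubst al w)). split; [right; eauto|].
    rewrite !holds_fsubst. apply holds_agree. intros x Hx.
    unfold subst_val at 1 3. rewrite vsubst_map, teval_tsubst; auto.
Qed.

End Instances.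

Section CanonicalSolution.
Context {Fn Pr : Type} (S : @sigma1_sequent Fn Pr) (H : @term_sets Fn)
  (Dc : @decomposition Fn).
Hypothesis Hwf : sigma1_wf S.
Hypothesis Hdec : is_decomposition S H Dc.

Lemma U_instances_fvars :
  forall A, In A (inst_ante S (U Dc)) \/ In A (inst_succ S (U Dc)) ->
  forall x, In x (fvars A) -> In x (alphas Dc).
Proof.
  destruct Hdec as (_ & _ & Hshape & Hvars & _).
  assert (Hblock : forall i b Ui, nth_error (blocks S) i = Some b ->
            nth_error (U Dc) i = Some Ui ->
            forall A, In A (instances b Ui) -> forall x, In x (fvars A) -> In x (alphas Dc)).
  { intros i b Ui Eb EU. apply instances_fvars.
    - apply (Hwf b (nth_error_In _ _ Eb)).
    - exact (shaped_nth S (U Dc) i b Ui Hshape Eb EU).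
    - intros u s x Hu Hs Hx. eauto using nth_error_In. }
  intros A [HA|HA].
  - apply in_inst_ante in HA as (i & b & Ui & _ & Eb & EU & HA). eauto.
  - apply in_inst_succ in HA as (i & b & Ui & _ & Eb & EU & HA). eauto.
Qed.

Lemma canonical_formula_fvars :
  forall x, In x (fvars (canonical_formula S Dc)) -> In x (alphas Dc).
Proof.
  intros x Hx. unfold canonical_formula in Hx. simpl in Hx.
  apply in_app_or in Hx as [Hx|Hx].
  - apply fvars_big_conj in Hx as [A [HA Hx]].
    exact (U_instances_fvars A (or_introl HA) x Hx).
  - apply fvars_big_disj in Hx as [A [HA Hx]].
    exact (U_instances_fvars A (or_intror HA) x Hx).
Qed.

Hypothesis Hherb : herbrand_structure S H.

(** Core of the argument: F'_l |- F'_r cannot be refuted simultaneously by a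
    valuation and by all its shifts along W, since the Herbrand sequent would
    then be refuted by the valuation itself. *)
Lemma no_uniform_refutation {D} (I : Fn -> list D -> D) (J : Pr -> list D -> Prop)
    (v : nat -> D) :
  (forall v', shifts I v (alphas Dc) (W Dc) v' -> refutes I J v' (Fl' S Dc) (Fr' S Dc)) ->
  False.
Proof.
  intros Hrefutes.
  destruct Hherb as (HshH & _ & Htaut).
  destruct Hdec as (_ & _ & HshU & _ & _ & Hinst).
  set (R := fun A A' : formula Fn Pr =>
              exists v', shifts I v (alphas Dc) (W Dc) v' /\ (holds I J v A <-> holds I J v' A')).
  destruct (inst_transfer S H (U Dc) R) as [Hante Hsucc].
  { rewrite <- (Forall2_length HshH), <- (Forall2_length HshU). reflexivity. }
  { intros i b Hi Ui Eb EH EU. apply instances_transfer.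
    - apply (Hwf b (nth_error_In _ _ Eb)).
    - exact (shaped_nth S (U Dc) i b Ui HshU Eb EU).
    - intros Hne t Ht. exact (proj1 (Hinst i b Eb Hne Hi Ui EH EU t) Ht). }
  destruct (Htaut D I J v) as (B & HB & HBh).
  - intros A HA. destruct (Hante A HA) as (A' & HA' & v' & Hv' & Hiff).
    apply Hiff, (proj1 (Hrefutes v' Hv')), HA'.
  - destruct (Hsucc B HB) as (B' & HB' & v' & Hv' & Hiff).
    apply (proj2 (Hrefutes v' Hv') B' HB'), Hiff, HBh.
Qed.

End CanonicalSolution.

Theorem mainTheorem1 (Fn Pr : Type) (S : @sigma1_sequent Fn Pr)
    (H : @term_sets Fn) (Dc : @decomposition Fn) :
  sigma1_wf S ->
  herbrand_structure S H ->
  is_decomposition S H Dc ->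
  (forall x, In x (fvars (canonical_formula S Dc)) -> In x (alphas Dc)) /\
  is_solution S Dc (canonical_formula S Dc).
Proof.
  intros Hwf Hherb Hdec. split; [exact (canonical_formula_fvars S H Dc Hwf Hdec)|].
  intros D I J v Hant.
  apply NNPP. intros Hno.
  (* v satisfies F'_l and no formula of F'_r, i.e. it satisfies C. *)
  assert (HC : refutes I J v (Fl' S Dc) (Fr' S Dc)).
  { split; [intros A HA; apply Hant; right; exact HA | eauto]. }
  (* Hence v satisfies every C(w), i.e. every shift of v satisfies C. *)
  assert (HCw : holds I J v (big_conj (map (fun w => fsubst (vsubst (alphas Dc) w)
                  (canonical_formula S Dc)) (W Dc)))).
  { apply (Hant _ (or_introl eq_refl)), holds_refutation_formula, HC. }
  rewrite big_conj_holds in HCw.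
  apply (no_uniform_refutation S H Dc Hwf Hdec Hherb I J v).
  intros v' [-> | (w & Hw & ->)]; [exact HC|].
  apply holds_refutation_formula, holds_fsubst, HCw, in_map_iff. eauto.
Qed.
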